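(* Let $G$ be a small connected fair graph with $\chi(\mathcal{F}_{\mathrm{Top}_1}(G))\in\mathbb{Z}$. If a small computad $(G,\mathfrak{g}_2,s,t)$ presents the thin category $\overline{\mathcal{M}_1}\mathcal{F}_1(G)$, then $|\mathfrak{g}_2|\ge 1-\chi(\mathcal{F}_{\mathrm{Top}_1}(G))$.
   Context: Graphs and their categories. - A small graph $G$ consists of a set of objects, a set of arrows, and domain and codomain maps. - $\mathcal{F}_1(G)$ is the free category on $G$. - $\mathcal{L}_1\mathcal{F}_1(G)$ is the free groupoid on $G$. - $\overline{\mathcal{M}_1}\mathcal{F}_1(G)$ is the thin (preorder) reflection of $\mathcal{F}_1(G)$. Trees and weak trees. - A graph is connected if its free category is connected. - A tree is a connected graph $T$ with $\mathcal{L}_1\mathcal{F}_1(T)$ thin. - A weak tree is a connected graph $T$ with $\mathcal{F}_1(T)$ thin. - A maximal weak tree of $G$ is a subgraph that is a weak tree and is maximal among such. - $G$ is a fair graph if it has a maximal weak tree which is a tree. $\mathcal{F}_{\mathrm{Top}_1}(G)$ is the topological realization of $G$, and $\chi$ is the real Euler characteristic. A small computad $(G,\mathfrak{g}_2,s,t)$ is a set $\mathfrak{g}_2$ together with, for each $\alpha$, parallel morphisms $s(\alpha),t(\alpha)$ of $\mathcal{F}_1(G)$. It presents the quotient of $\mathcal{F}_1(G)$ by the congruence generated by $s(\alpha)=t(\alpha)$. *)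

From Stdlib Require Import List ZArith Relations ClassicalEpsilon.
Import ListNotations.
Open Scope Z_scope.

Record graph := Graph {
  Ob : Type;
  Ar : Type;
  dom : Ar -> Ob;
  cod : Ar -> Ob }.

(** Morphisms x -> y of the free category F1(G): composable lists of arrows
    (diagrammatic order; composition is ++, identities are nil). *)
Fixpoint valid_path (G : graph) (x y : Ob G) (p : list (Ar G)) : Prop :=
  match p with
  | [] => x = y
  | f :: q => dom G f = x /\ valid_path G (cod G f) y q
  end.

Definition hom_exists (G : graph) (x y : Ob G) : Prop :=
  exists p, valid_path G x y p.

Definition connected (G : graph) : Prop :=
  inhabited (Ob G) /\ forall x y : Ob G, clos_refl_sym_trans _ (hom_exists G) x y.

Definition free_cat_thin (G : graph) : Prop :=
  forall (x y : Ob G) (p q : list (Ar G)),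
    valid_path G x y p -> valid_path G x y q -> p = q.

(** Free groupoid L1F1(G): words in arrows (true) and formal inverses (false),
    modulo cancellation of adjacent inverse letters. *)
Definition letter (G : graph) := (Ar G * bool)%type.

Definition lsrc (G : graph) (l : letter G) : Ob G :=
  if snd l then dom G (fst l) else cod G (fst l).
Definition ltgt (G : graph) (l : letter G) : Ob G :=
  if snd l then cod G (fst l) else dom G (fst l).

Fixpoint valid_word (G : graph) (x y : Ob G) (w : list (letter G)) : Prop :=
  match w with
  | [] => x = y
  | l :: q => lsrc G l = x /\ valid_word G (ltgt G l) y q
  end.

Inductive cancel_step (G : graph) : list (letter G) -> list (letter G) -> Prop :=
  | cancel_intro : forall (w1 w2 : list (letter G)) (f : Ar G) (b : bool),
      cancel_step G (w1 ++ (f, b) :: (f, negb b) :: w2) (w1 ++ w2).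

Definition groupoid_eq (G : graph) := clos_refl_sym_trans _ (cancel_step G).

Definition free_groupoid_thin (G : graph) : Prop :=
  forall (x y : Ob G) (w1 w2 : list (letter G)),
    valid_word G x y w1 -> valid_word G x y w2 -> groupoid_eq G w1 w2.

Definition is_tree (G : graph) : Prop := connected G /\ free_groupoid_thin G.
Definition is_weak_tree (G : graph) : Prop := connected G /\ free_cat_thin G.

Record subgraph (G : graph) := Subgraph {
  sob : Ob G -> Prop;
  sar : Ar G -> Prop;
  sar_dom : forall f, sar f -> sob (dom G f);
  sar_cod : forall f, sar f -> sob (cod G f) }.

Definition sub_graph (G : graph) (S : subgraph G) : graph :=
  {| Ob := {x : Ob G | sob G S x};
     Ar := {f : Ar G | sar G S f};
     dom := fun f => exist _ (dom G (proj1_sig f)) (sar_dom G S _ (proj2_sig f));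
     cod := fun f => exist _ (cod G (proj1_sig f)) (sar_cod G S _ (proj2_sig f)) |}.

Definition subgraph_le (G : graph) (S T : subgraph G) : Prop :=
  (forall x, sob G S x -> sob G T x) /\ (forall f, sar G S f -> sar G T f).

Definition maximal_weak_tree (G : graph) (S : subgraph G) : Prop :=
  is_weak_tree (sub_graph G S) /\
  forall T : subgraph G, is_weak_tree (sub_graph G T) -> subgraph_le G S T ->
    subgraph_le G T S.

Definition fair (G : graph) : Prop :=
  exists S : subgraph G, maximal_weak_tree G S /\ is_tree (sub_graph G S).

(** Cellular homology of the topological realization F_Top1(G)
    (a 1-dimensional CW complex: 0-cells = objects, 1-cells = arrows). *)
Definition deltaZ {A : Type} (a b : A) : Z :=
  if excluded_middle_informative (a = b) then 1 else 0.

(** A cellular 1-chain: a finite formal integer combination of arrows. *)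
Definition chain (G : graph) := list (Ar G * Z).

Definition coeff (G : graph) (c : chain G) (f : Ar G) : Z :=
  fold_right (fun ek acc => snd ek * deltaZ (fst ek) f + acc) 0 c.

Definition boundary (G : graph) (c : chain G) (v : Ob G) : Z :=
  fold_right (fun ek acc =>
     snd ek * (deltaZ (cod G (fst ek)) v - deltaZ (dom G (fst ek)) v) + acc) 0 c.

Definition is_cycle (G : graph) (c : chain G) : Prop :=
  forall v, boundary G c v = 0.

Fixpoint sum_to (n : nat) (F : nat -> Z) : Z :=
  match n with O => 0 | S m => sum_to m F + F m end.

Definition independent (G : graph) (n : nat) (z : nat -> chain G) : Prop :=
  forall a : nat -> Z,
    (forall f, sum_to n (fun i => a i * coeff G (z i) f) = 0) ->
    forall i, (i < n)%nat -> a i = 0.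

(** H_1 = Z_1 (no 2-cells), a free abelian group; its rank is n. *)
Definition betti1 (G : graph) (n : nat) : Prop :=
  (exists z : nat -> chain G, (forall i, (i < n)%nat -> is_cycle G (z i)) /\
                              independent G n z) /\
  ~ (exists z : nat -> chain G, (forall i, (i < S n)%nat -> is_cycle G (z i)) /\
                                independent G (S n) z).

(** rank H_0 = number of path components of the realization. *)
Definition adjacent (G : graph) (x y : Ob G) : Prop :=
  exists f, dom G f = x /\ cod G f = y.

Definition betti0 (G : graph) (n : nat) : Prop :=
  exists v : nat -> Ob G,
    (forall i j, (i < n)%nat -> (j < n)%nat -> i <> j ->
       ~ clos_refl_sym_trans _ (adjacent G) (v i) (v j)) /\
    (forall x, exists i, (i < n)%nat /\ clos_refl_sym_trans _ (adjacent G) x (v i)).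

Definition euler_char_is (G : graph) (c : Z) : Prop :=
  exists b0 b1 : nat, betti0 G b0 /\ betti1 G b1 /\ c = Z.of_nat b0 - Z.of_nat b1.

Record computad (G : graph) := Computad {
  cells2 : Type;
  csrc : cells2 -> Ob G;
  ctgt : cells2 -> Ob G;
  s2 : cells2 -> list (Ar G);
  t2 : cells2 -> list (Ar G);
  s2_valid : forall a, valid_path G (csrc a) (ctgt a) (s2 a);
  t2_valid : forall a, valid_path G (csrc a) (ctgt a) (t2 a) }.

Inductive cstep (G : graph) (C : computad G) (x y : Ob G) :
    list (Ar G) -> list (Ar G) -> Prop :=
  | cstep_intro : forall (a : cells2 G C) (p q : list (Ar G)),
      valid_path G x (csrc G C a) p -> valid_path G (ctgt G C a) y q ->
      cstep G C x y (p ++ s2 G C a ++ q) (p ++ t2 G C a ++ q).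

Definition presented_eq (G : graph) (C : computad G) (x y : Ob G) :=
  clos_refl_sym_trans _ (cstep G C x y).

(** C presents the thin reflection of F1(G): the generated congruence
    identifies all parallel morphisms (it is always contained in parallelism). *)
Definition presents_thin_reflection (G : graph) (C : computad G) : Prop :=
  forall (x y : Ob G) (p q : list (Ar G)),
    valid_path G x y p -> valid_path G x y q -> presented_eq G C x y p q.

Definition card_ge (A : Type) (m : Z) : Prop :=
  forall n : nat, Z.of_nat n <= m ->
    exists h : {k : nat | (k < n)%nat} -> A,
      forall u v, h u = h v -> u = v.

(* The relations [s a - t a] of the 2-cells span every cellular 1-cycle of [G] up to a nonzero
   integer multiple; since rank H_1 = 1 - chi for connected [G], there are at least 1 - chi cells.
   Let [T] be a maximal weak tree that is a tree.  By maximality [T] contains every vertex, and for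
   an arrow [f] outside [T] the graph [T + f] is not thin: it has parallel paths [p <> q], and these
   differ in their number of [f]'s.  As the computad presents the thin reflection, [p - q] lies in
   the span; it is a cycle supported in [T + f] with nonzero [f]-coefficient.  Eliminating the
   arrows outside [T] one at a time reduces a multiple of any cycle to a cycle supported in [T],
   which vanishes because the free groupoid on [T] is thin. *)

From Stdlib Require Import ZArith List Lia Relations ClassicalEpsilon ProofIrrelevance Classical.
Import ListNotations.
Open Scope Z_scope.

Lemma deltaZ_refl {A} (a : A) : deltaZ a a = 1.
Proof. unfold deltaZ; destruct (excluded_middle_informative (a = a)); congruence. Qed.

Lemma deltaZ_neq {A} (a b : A) : a <> b -> deltaZ a b = 0.
Proof. unfold deltaZ; destruct (excluded_middle_informative (a = b)); congruence. Qed.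

Definition dec_eq {A : Type} (a b : A) : {a = b} + {a <> b} := excluded_middle_informative (a = b).

Lemma sig_eq {A} (P : A -> Prop) (x y : {a | P a}) : proj1_sig x = proj1_sig y -> x = y.
Proof. destruct x, y; simpl; intros ->; f_equal; apply proof_irrelevance. Qed.

Lemma in_split_first {A} (a : A) l : In a l -> exists l1 l2, l = l1 ++ a :: l2 /\ ~ In a l1.
Proof.
  induction l as [|b l IH]; [intros []|]; intros Ha.
  destruct (classic (b = a)) as [<-|Hne]; [exists [], l; auto|].
  destruct Ha as [|Ha]; [contradiction|].
  destruct (IH Ha) as [l1 [l2 [-> Hl1]]]; exists (b :: l1), l2; simpl; intuition.
Qed.

Definition lsum {A} (l : list A) (F : A -> Z) : Z := fold_right (fun a acc => F a + acc) 0 l.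

Lemma lsum_cons {A} (a : A) l F : lsum (a :: l) F = F a + lsum l F.
Proof. reflexivity. Qed.

Lemma lsum_app {A} (l1 l2 : list A) F : lsum (l1 ++ l2) F = lsum l1 F + lsum l2 F.
Proof. induction l1; simpl; [lia|]. rewrite IHl1; lia. Qed.

Lemma lsum_ext {A} (l : list A) F F' : (forall a, In a l -> F a = F' a) -> lsum l F = lsum l F'.
Proof. induction l; simpl; intros H; auto. rewrite H, IHl; auto. Qed.

Lemma lsum_zero {A} (l : list A) F : (forall a, In a l -> F a = 0) -> lsum l F = 0.
Proof. induction l; simpl; intros H; auto. rewrite H, IHl; auto. Qed.

Lemma lsum_add {A} (l : list A) F F' : lsum l (fun a => F a + F' a) = lsum l F + lsum l F'.
Proof. induction l; simpl; [lia|]. rewrite IHl; lia. Qed.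

Lemma lsum_sub {A} (l : list A) F F' : lsum l (fun a => F a - F' a) = lsum l F - lsum l F'.
Proof. induction l; simpl; [lia|]. rewrite IHl; lia. Qed.

Lemma lsum_mull {A} (l : list A) k F : lsum l (fun a => k * F a) = k * lsum l F.
Proof. induction l; simpl; [lia|]. rewrite IHl; ring. Qed.

Lemma lsum_comm {A B} (l1 : list A) (l2 : list B) F :
  lsum l1 (fun a => lsum l2 (F a)) = lsum l2 (fun b => lsum l1 (fun a => F a b)).
Proof.
  induction l1; simpl.
  - symmetry; apply lsum_zero; auto.
  - rewrite IHl1, <- lsum_add; reflexivity.
Qed.

Lemma lsum_delta {A} (V : list A) F x :
  NoDup V -> In x V -> lsum V (fun v => F v * deltaZ x v) = F x.
Proof.
  induction V as [|a V IH]; simpl; intros Hnd Hx; [contradiction|].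
  inversion Hnd as [|? ? HaV HndV]; subst.
  destruct Hx as [<-|Hx].
  - rewrite deltaZ_refl, lsum_zero; [ring|].
    intros b Hb; rewrite deltaZ_neq; [ring|]; intros ->; contradiction.
  - rewrite IH, deltaZ_neq; auto; [ring|]; intros ->; contradiction.
Qed.

Lemma lsum_regroup {A B} (V : list A) (z : list B) (w : B -> A) (c : B -> Z) (F : A -> Z) :
  NoDup V -> (forall e, In e z -> In (w e) V) ->
  lsum z (fun e => c e * F (w e)) = lsum V (fun v => F v * lsum z (fun e => c e * deltaZ (w e) v)).
Proof.
  intros Hnd HV.
  transitivity (lsum z (fun e => lsum V (fun v => c e * (F v * deltaZ (w e) v)))).
  - apply lsum_ext; intros e He. rewrite lsum_mull, lsum_delta; auto.
  - rewrite lsum_comm. apply lsum_ext; intros v _. rewrite <- lsum_mull.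
    apply lsum_ext; intros; ring.
Qed.

Lemma sum_to_ext n F F' : (forall i, (i < n)%nat -> F i = F' i) -> sum_to n F = sum_to n F'.
Proof. induction n; simpl; intros H; auto. rewrite IHn, H; auto. Qed.

Lemma sum_to_zero n F : (forall i, (i < n)%nat -> F i = 0) -> sum_to n F = 0.
Proof. induction n; simpl; intros H; auto. rewrite IHn, H; auto. Qed.

Lemma sum_to_sub n F F' : sum_to n (fun i => F i - F' i) = sum_to n F - sum_to n F'.
Proof. induction n; simpl; [lia|]. rewrite IHn; lia. Qed.

Lemma sum_to_mull n k F : sum_to n (fun i => k * F i) = k * sum_to n F.
Proof. induction n; simpl; [lia|]. rewrite IHn; ring. Qed.

Lemma sum_to_lsum_comm {A} n (l : list A) F :
  sum_to n (fun i => lsum l (F i)) = lsum l (fun a => sum_to n (fun i => F i a)).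
Proof.
  induction n; simpl.
  - symmetry; apply lsum_zero; auto.
  - rewrite IHn, <- lsum_add; reflexivity.
Qed.

Definition skip (i0 i : nat) : nat := if Nat.ltb i i0 then i else S i.

Lemma sum_to_skip n i0 F : (i0 < n)%nat ->
  sum_to n F = F i0 + sum_to (n - 1) (fun i => F (skip i0 i)).
Proof.
  induction n as [|n IH]; intros Hi0; [lia|].
  change (sum_to (S n) F) with (sum_to n F + F n).
  destruct (Nat.eq_dec i0 n) as [->|Hne].
  - replace (S n - 1)%nat with n by lia.
    rewrite (sum_to_ext n (fun i => F (skip n i)) F); [ring|].
    intros i Hi; unfold skip; destruct (Nat.ltb_spec i n); [auto|lia].
  - rewrite IH by lia. replace (S n - 1)%nat with (S (n - 1)) by lia. simpl.
    replace (skip i0 (n - 1)) with n by (unfold skip; destruct (Nat.ltb_spec (n - 1) i0); lia).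
    ring.
Qed.

(** * Chains and paths *)

Section Chains.
Variable G : graph.

Definition scale (k : Z) (c : chain G) : chain G := map (fun e => (fst e, k * snd e)) c.
Definition path_chain (p : list (Ar G)) : chain G := map (fun h => (h, 1)) p.
Definition path_diff (p q : list (Ar G)) : chain G := path_chain p ++ scale (-1) (path_chain q).
Definition arrow_count (f : Ar G) (p : list (Ar G)) : Z := lsum p (fun h => deltaZ h f).

Lemma coeff_app c1 c2 f : coeff G (c1 ++ c2) f = coeff G c1 f + coeff G c2 f.
Proof. apply lsum_app. Qed.

Lemma boundary_app c1 c2 v : boundary G (c1 ++ c2) v = boundary G c1 v + boundary G c2 v.
Proof. apply lsum_app. Qed.

Lemma coeff_scale k c f : coeff G (scale k c) f = k * coeff G c f.
Proof. unfold coeff, scale. induction c; simpl; [|rewrite IHc]; ring. Qed.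

Lemma boundary_scale k c v : boundary G (scale k c) v = k * boundary G c v.
Proof. unfold boundary, scale. induction c; simpl; [|rewrite IHc]; ring. Qed.

Lemma arrow_count_app f p q : arrow_count f (p ++ q) = arrow_count f p + arrow_count f q.
Proof. apply lsum_app. Qed.

Lemma arrow_count_cons f h p : arrow_count f (h :: p) = deltaZ h f + arrow_count f p.
Proof. reflexivity. Qed.

Lemma arrow_count_notin f p : ~ In f p -> arrow_count f p = 0.
Proof. intros H; apply lsum_zero; intros h Hh; apply deltaZ_neq; intros ->; contradiction. Qed.

Lemma arrow_count_nonneg f p : 0 <= arrow_count f p.
Proof.
  induction p as [|h p IH]; [reflexivity|]; rewrite arrow_count_cons.
  unfold deltaZ; destruct excluded_middle_informative; lia.
Qed.

Lemma arrow_count_in f p : In f p -> 0 < arrow_count f p.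
Proof.
  intros Hf; destruct (in_split _ _ Hf) as [p1 [p2 ->]].
  rewrite arrow_count_app, arrow_count_cons, deltaZ_refl.
  pose proof (arrow_count_nonneg f p1); pose proof (arrow_count_nonneg f p2); lia.
Qed.

Lemma coeff_path_chain p f : coeff G (path_chain p) f = arrow_count f p.
Proof.
  induction p as [|h p IH]; [reflexivity|].
  change (1 * deltaZ h f + coeff G (path_chain p) f = deltaZ h f + arrow_count f p).
  rewrite IH; ring.
Qed.

Lemma coeff_path_diff p q f : coeff G (path_diff p q) f = arrow_count f p - arrow_count f q.
Proof. unfold path_diff; rewrite coeff_app, coeff_scale, !coeff_path_chain; ring. Qed.

Lemma boundary_path_chain p v :
  boundary G (path_chain p) v = lsum p (fun h => deltaZ (cod G h) v - deltaZ (dom G h) v).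
Proof.
  induction p as [|h p IH]; [reflexivity|].
  change (1 * (deltaZ (cod G h) v - deltaZ (dom G h) v) + boundary G (path_chain p) v
          = (deltaZ (cod G h) v - deltaZ (dom G h) v)
            + lsum p (fun h => deltaZ (cod G h) v - deltaZ (dom G h) v)).
  rewrite IH; ring.
Qed.

Lemma valid_path_app x y p q :
  valid_path G x y (p ++ q) <-> exists z, valid_path G x z p /\ valid_path G z y q.
Proof.
  revert x; induction p as [|h p IH]; intros x; simpl.
  - split; [intros H; exists x; auto | intros [z [-> H]]; auto].
  - rewrite IH. split.
    + intros [Hd [z [H1 H2]]]; exists z; auto.
    + intros [z [[Hd H1] H2]]; split; eauto.
Qed.

Lemma boundary_valid_path x y p v :
  valid_path G x y p -> boundary G (path_chain p) v = deltaZ y v - deltaZ x v.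
Proof.
  rewrite boundary_path_chain; revert x; induction p as [|h p IH]; simpl; intros x.
  - intros ->; ring.
  - intros [<- Hp]; rewrite (IH _ Hp); ring.
Qed.

Lemma path_diff_cycle x y p q :
  valid_path G x y p -> valid_path G x y q -> is_cycle G (path_diff p q).
Proof.
  intros Hp Hq v; unfold path_diff.
  rewrite boundary_app, boundary_scale,
    (boundary_valid_path _ _ _ _ Hp), (boundary_valid_path _ _ _ _ Hq).
  ring.
Qed.

Lemma coeff_nonzero_in c f : coeff G c f <> 0 -> In f (map fst c).
Proof.
  induction c as [|e c IH]; simpl; [lia|]. intros Hc.
  destruct (classic (fst e = f)) as [|Hne]; [auto|].
  right; apply IH; rewrite deltaZ_neq in Hc; auto; lia.
Qed.

Lemma chain_pairing_ext (z : chain G) (psi psi' : Ar G -> Z) :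
  (forall h, coeff G z h <> 0 -> psi h = psi' h) ->
  lsum z (fun e => snd e * psi (fst e)) = lsum z (fun e => snd e * psi' (fst e)).
Proof.
  intros Hpsi. set (V := nodup dec_eq (map fst z)).
  assert (HV : forall e, In e z -> In (fst e) V) by (intros; apply nodup_In, in_map; auto).
  rewrite (lsum_regroup V z fst snd psi), (lsum_regroup V z fst snd psi');
    try apply NoDup_nodup; auto.
  apply lsum_ext; intros h _.
  change (lsum z (fun e => snd e * deltaZ (fst e) h)) with (coeff G z h).
  destruct (Z.eq_dec (coeff G z h) 0) as [E|E]; [rewrite E; ring | rewrite Hpsi; auto].
Qed.

Lemma cycle_pairing_coboundary (z : chain G) (phi : Ob G -> Z) : is_cycle G z ->
  lsum z (fun e => snd e * (phi (cod G (fst e)) - phi (dom G (fst e)))) = 0.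
Proof.
  intros Hz. set (V := nodup dec_eq (flat_map (fun e => [dom G (fst e); cod G (fst e)]) z)).
  assert (HV : forall e, In e z -> In (dom G (fst e)) V /\ In (cod G (fst e)) V).
  { intros e He; split; apply nodup_In, in_flat_map; exists e; simpl; auto. }
  transitivity (lsum z (fun e => snd e * phi (cod G (fst e)))
                - lsum z (fun e => snd e * phi (dom G (fst e)))).
  { rewrite <- lsum_sub; apply lsum_ext; intros; ring. }
  rewrite (lsum_regroup V z (fun e => cod G (fst e)) snd phi),
          (lsum_regroup V z (fun e => dom G (fst e)) snd phi), <- lsum_sub;
    try apply NoDup_nodup; try (intros e He; apply HV, He).
  apply lsum_zero; intros v _. rewrite <- Z.mul_sub_distr_l, <- lsum_sub.
  transitivity (phi v * boundary G z v); [|rewrite Hz; ring].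
  change (boundary G z v)
    with (lsum z (fun e => snd e * (deltaZ (cod G (fst e)) v - deltaZ (dom G (fst e)) v))).
  f_equal; apply lsum_ext; intros; ring.
Qed.

End Chains.

Lemma connect_map (G H : graph) (fo : Ob G -> Ob H) (fa : Ar G -> Ar H) :
  (forall h, dom H (fa h) = fo (dom G h)) -> (forall h, cod H (fa h) = fo (cod G h)) ->
  forall x y, clos_refl_sym_trans _ (hom_exists G) x y ->
              clos_refl_sym_trans _ (hom_exists H) (fo x) (fo y).
Proof.
  intros Hd Hc x y Hxy; induction Hxy as [x y [p Hp]| | |].
  - apply rst_step; exists (map fa p).
    revert x Hp; induction p as [|h p IH]; simpl; intros x.
    + intros ->; reflexivity.
    + intros [<- Hp]; split; [apply Hd | rewrite Hc; apply IH, Hp].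
  - apply rst_refl.
  - apply rst_sym; assumption.
  - eapply rst_trans; eassumption.
Qed.

(** * Subgraphs *)

Section Subgraphs.
Variable G : graph.

Definition thin_on (A : Ar G -> Prop) : Prop :=
  forall x y p q, Forall A p -> Forall A q -> valid_path G x y p -> valid_path G x y q -> p = q.

Lemma valid_path_proj (S : subgraph G) x y p : valid_path (sub_graph G S) x y p ->
  valid_path G (proj1_sig x) (proj1_sig y) (map (@proj1_sig _ _) p).
Proof.
  revert x; induction p as [|h p IH]; intros x; simpl.
  - intros ->; reflexivity.
  - intros [<- Hp]; split; [reflexivity | apply (IH _ Hp)].
Qed.

Lemma valid_path_lift (S : subgraph G) x y p (Hx : sob G S x) :
  Forall (sar G S) p -> valid_path G x y p ->
  exists (y' : Ob (sub_graph G S)) p', proj1_sig y' = y /\ map (@proj1_sig _ _) p' = p /\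
                                      valid_path (sub_graph G S) (exist _ x Hx) y' p'.
Proof.
  intros HS; revert x Hx; induction HS as [|h p Hh HS IH]; intros x Hx; simpl.
  - intros <-; exists (exist _ x Hx), []; repeat split.
  - intros [Hd Hp]; destruct (IH _ (sar_cod G S h Hh) Hp) as [y' [p' [Ey [<- Hp']]]].
    exists y', (exist _ h Hh :: p'); split; [exact Ey|]; split; [reflexivity|].
    split; [apply sig_eq; exact Hd | exact Hp'].
Qed.

Lemma map_proj1_sig_inj {A} (P : A -> Prop) (r r' : list {a | P a}) :
  map (@proj1_sig _ _) r = map (@proj1_sig _ _) r' -> r = r'.
Proof.
  revert r'; induction r as [|a r IH]; intros [|a' r'] E; try discriminate; [reflexivity|].
  injection E as Ea Er; f_equal; [apply sig_eq, Ea | apply IH, Er].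
Qed.

Lemma free_cat_thin_sub_graph (S : subgraph G) :
  free_cat_thin (sub_graph G S) <-> thin_on (sar G S).
Proof.
  split.
  - intros Hthin x y p q Hp Hq Vp Vq.
    destruct (classic (sob G S x)) as [Hx|Hx].
    + destruct (valid_path_lift S x y p Hx Hp Vp) as [y1 [p' [Ey1 [<- Vp']]]].
      destruct (valid_path_lift S x y q Hx Hq Vq) as [y2 [q' [Ey2 [<- Vq']]]].
      assert (y1 = y2) as <- by (apply sig_eq; congruence).
      rewrite (Hthin _ _ _ _ Vp' Vq'); reflexivity.
    + destruct p as [|h p]; [destruct q as [|h' q]; [reflexivity|]|]; exfalso; apply Hx.
      * destruct Vq as [<- _]; inversion Hq; apply sar_dom; assumption.
      * destruct Vp as [<- _]; inversion Hp; apply sar_dom; assumption.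
  - intros Hthin x y p q Vp Vq.
    apply map_proj1_sig_inj, (Hthin (proj1_sig x) (proj1_sig y));
      try (apply valid_path_proj; assumption);
      apply Forall_map, Forall_forall; intros h _; exact (proj2_sig h).
Qed.

Lemma connect_crossing_arrow (P : Ob G -> Prop) x y :
  clos_refl_sym_trans _ (hom_exists G) x y -> ~ (P x <-> P y) ->
  exists f, ~ (P (dom G f) <-> P (cod G f)).
Proof.
  intros Hxy; induction Hxy as [x y [p Hp]| x | x y _ IH | x y z _ IH1 _ IH2]; intros Hxy.
  - revert x Hp Hxy; induction p as [|h p IHp]; simpl; intros x.
    + intros ->; tauto.
    + intros [<- Hp] Hxy.
      destruct (classic (P (dom G h) <-> P (cod G h))); [apply (IHp _ Hp) | exists h]; tauto.
  - tauto.
  - apply IH; tauto.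
  - destruct (classic (P x <-> P y)); [apply IH2 | apply IH1]; tauto.
Qed.

Definition add_arrow (T : subgraph G) (f : Ar G) : subgraph G :=
  {| sob := fun x => sob G T x \/ x = dom G f \/ x = cod G f;
     sar := fun h => sar G T h \/ h = f;
     sar_dom := fun h Hh => match Hh with
                            | or_introl H => or_introl (sar_dom G T h H)
                            | or_intror E => or_intror (or_introl (f_equal (dom G) E)) end;
     sar_cod := fun h Hh => match Hh with
                            | or_introl H => or_introl (sar_cod G T h H)
                            | or_intror E => or_intror (or_intror (f_equal (cod G) E)) end |}.

Lemma add_arrow_connected T f :
  connected (sub_graph G T) -> sob G T (dom G f) \/ sob G T (cod G f) ->
  connected (sub_graph G (add_arrow T f)).
Proof.
  intros [[o] Hconn] Hf.
  set (Tf := sub_graph G (add_arrow T f)).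
  set (incl := (fun x => exist _ (proj1_sig x) (or_introl (proj2_sig x)))
               : Ob (sub_graph G T) -> Ob Tf).
  assert (Hincl : forall x y, clos_refl_sym_trans _ (hom_exists Tf) (incl x) (incl y)).
  { intros x y; apply connect_map with
      (fa := fun h => exist _ (proj1_sig h) (or_introl (proj2_sig h)) : Ar Tf);
      [intros h | intros h | apply Hconn]; apply sig_eq; reflexivity. }
  set (f' := exist _ f (or_intror eq_refl) : Ar Tf).
  assert (Hreach : forall x, exists u, clos_refl_sym_trans _ (hom_exists Tf) x (incl u)).
  { intros [x Hx].
    destruct (classic (sob G T x)) as [HxT|HxT].
    { exists (exist _ x HxT).
      rewrite (proof_irrelevance _ Hx (or_introl HxT)); apply rst_refl. }
    destruct Hx as [|[Ex|Ex]]; [contradiction| |]; subst x.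
    - assert (Hc : sob G T (cod G f)) by tauto.
      exists (exist _ _ Hc); apply rst_step; exists [f'].
      split; apply sig_eq; reflexivity.
    - assert (Hd : sob G T (dom G f)) by tauto.
      exists (exist _ _ Hd); apply rst_sym, rst_step; exists [f'].
      split; apply sig_eq; reflexivity. }
  split; [exact (inhabits (incl o))|].
  intros x y; destruct (Hreach x) as [u Hu], (Hreach y) as [v Hv].
  eapply rst_trans; [exact Hu|]; eapply rst_trans; [apply Hincl | apply rst_sym, Hv].
Qed.

Lemma maximal_weak_tree_add_arrow T f : maximal_weak_tree G T ->
  sob G T (dom G f) \/ sob G T (cod G f) -> thin_on (sar G (add_arrow T f)) ->
  sar G T f /\ sob G T (dom G f) /\ sob G T (cod G f).
Proof.
  intros [[Hconn _] Hmax] Hf Hthin.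
  destruct (Hmax (add_arrow T f)) as [Hob Har].
  - split; [apply add_arrow_connected; assumption | apply free_cat_thin_sub_graph, Hthin].
  - split; intros; simpl; auto.
  - split; [apply Har | split; apply Hob]; simpl; auto.
Qed.

Lemma Forall_add_arrow_notin T f p :
  Forall (sar G (add_arrow T f)) p -> ~ In f p -> Forall (sar G T) p.
Proof. induction 1 as [|h p [Hh| ->] _ IH]; simpl; intros Hn; constructor; tauto. Qed.

(** The first [f] splits two such paths into a common [T]-prefix and shorter [T + f]-suffixes. *)
Lemma add_arrow_paths_eq T f : thin_on (sar G T) ->
  forall x y p q, Forall (sar G (add_arrow T f)) p -> Forall (sar G (add_arrow T f)) q ->
  valid_path G x y p -> valid_path G x y q -> arrow_count G f p = arrow_count G f q -> p = q.
Proof.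
  intros Hthin x y p; remember (length p) as n eqn:Hn; revert x p Hn.
  induction n as [n IH] using lt_wf_ind; intros x p Hn q Hp Hq Vp Vq Hc.
  destruct (classic (In f p)) as [Hfp|Hfp].
  - assert (Hfq : In f q).
    { apply NNPP; intros Hfq; rewrite (arrow_count_notin G f q Hfq) in Hc.
      pose proof (arrow_count_in G f p Hfp); lia. }
    destruct (in_split_first f p Hfp) as [p1 [p2 [-> Np1]]].
    destruct (in_split_first f q Hfq) as [q1 [q2 [-> Nq1]]].
    apply Forall_app in Hp as [Hp1 Hp2]; apply Forall_app in Hq as [Hq1 Hq2].
    apply valid_path_app in Vp as [z1 [Vp1 [<- Vp2]]].
    apply valid_path_app in Vq as [z2 [Vq1 [<- Vq2]]].
    assert (p1 = q1) as <-.
    { apply (Hthin x (dom G f)); auto; eapply Forall_add_arrow_notin; eassumption. }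
    rewrite !arrow_count_app, !arrow_count_cons, deltaZ_refl in Hc.
    do 2 f_equal; apply (IH (length p2)) with (x := cod G f);
      eauto using Forall_inv_tail; [rewrite Hn, length_app; simpl|]; lia.
  - assert (Hfq : ~ In f q).
    { intros Hfq; rewrite (arrow_count_notin G f p Hfp) in Hc.
      pose proof (arrow_count_in G f q Hfq); lia. }
    apply (Hthin x y); auto; eapply Forall_add_arrow_notin; eassumption.
Qed.

Lemma boundary_path_chain_pendant T f w p : ~ sob G T w -> Forall (sar G (add_arrow T f)) p ->
  boundary G (path_chain G p) w = arrow_count G f p * (deltaZ (cod G f) w - deltaZ (dom G f) w).
Proof.
  intros Hw Hp; rewrite boundary_path_chain.
  induction Hp as [|h p [Hh| ->] _ IH]; [reflexivity| |].
  - assert (Hnw : forall v, sob G T v -> deltaZ v w = 0)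
      by (intros v Hv; apply deltaZ_neq; intros ->; contradiction).
    rewrite lsum_cons, IH, arrow_count_cons, (Hnw _ (sar_cod G T h Hh)), (Hnw _ (sar_dom G T h Hh)).
    destruct (classic (h = f)) as [->|Hne]; [|rewrite (deltaZ_neq h f Hne); ring].
    rewrite (Hnw _ (sar_cod G T f Hh)), (Hnw _ (sar_dom G T f Hh)); ring.
  - rewrite lsum_cons, IH, arrow_count_cons, deltaZ_refl; ring.
Qed.

(** If [T] missed a vertex, connectivity gives an arrow [f] with exactly one endpoint [w] outside
    [T].  Then [T + f] is still thin, because the boundary at [w] of a path of [T + f] is [+-1]
    times its number of [f]'s; maximality puts [w] into [T]. *)
Lemma maximal_weak_tree_spanning T : connected G -> maximal_weak_tree G T -> forall x, sob G T x.
Proof.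
  intros [_ HG] Hmt x; apply NNPP; intros Hx.
  pose proof Hmt as [[[[o] _] HthinT] _].
  apply free_cat_thin_sub_graph in HthinT.
  destruct (connect_crossing_arrow (sob G T) _ _ (HG (proj1_sig o) x)) as [f Hf].
  { pose proof (proj2_sig o); tauto. }
  assert (Hw : exists w, (w = dom G f \/ w = cod G f) /\ ~ sob G T w /\
                         (sob G T (dom G f) \/ sob G T (cod G f)) /\
                         deltaZ (cod G f) w - deltaZ (dom G f) w <> 0).
  { destruct (classic (sob G T (dom G f))) as [Hd|Hd].
    - assert (Hdc : dom G f <> cod G f) by (intros E; apply Hf; rewrite E; tauto).
      exists (cod G f); rewrite deltaZ_refl, deltaZ_neq by assumption; intuition lia.
    - assert (Hdc : cod G f <> dom G f) by (intros E; apply Hf; rewrite E; tauto).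
      assert (Hc : sob G T (cod G f)) by tauto.
      exists (dom G f); rewrite deltaZ_refl, deltaZ_neq by assumption; intuition lia. }
  destruct Hw as [w [Hwf [Hw [Hend Hfw]]]].
  destruct (maximal_weak_tree_add_arrow T f Hmt Hend) as [_ [Hd Hc]];
    [|destruct Hwf as [-> | ->]; contradiction].
  intros x' y p q Hp Hq Vp Vq.
  apply (add_arrow_paths_eq T f HthinT x' y); auto.
  apply (Z.mul_reg_r _ _ _ Hfw).
  rewrite <- !(boundary_path_chain_pendant T f w) by assumption.
  rewrite (boundary_valid_path G _ _ _ _ Vp), (boundary_valid_path G _ _ _ _ Vq); reflexivity.
Qed.

Lemma non_tree_arrow_parallel_paths T f : maximal_weak_tree G T -> (forall x, sob G T x) ->
  ~ sar G T f ->
  exists x y p q, Forall (sar G (add_arrow T f)) p /\ Forall (sar G (add_arrow T f)) q /\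
                  valid_path G x y p /\ valid_path G x y q /\
                  arrow_count G f p <> arrow_count G f q.
Proof.
  intros Hmt Hspan Hf; apply NNPP; intros Hno; apply Hf.
  apply (maximal_weak_tree_add_arrow T f Hmt (or_introl (Hspan _))).
  intros x y p q Hp Hq Vp Vq.
  apply (add_arrow_paths_eq T f (proj1 (free_cat_thin_sub_graph T) (proj2 (proj1 Hmt))) x y); auto.
  apply NNPP; intros Hc; apply Hno; exists x, y, p, q; auto.
Qed.

End Subgraphs.

(** * Trees *)

Section FreeGroupoid.
Variable H : graph.

Lemma valid_word_app x y w1 w2 :
  valid_word H x y (w1 ++ w2) <-> exists z, valid_word H x z w1 /\ valid_word H z y w2.
Proof.
  revert x; induction w1 as [|l w1 IH]; intros x; simpl.
  - split; [intros Hw; exists x; auto | intros [z [-> Hw]]; auto].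
  - rewrite IH; split.
    + intros [Hl [z [H1 H2]]]; exists z; auto.
    + intros [z [[Hl H1] H2]]; split; eauto.
Qed.

Definition invert_word (w : list (letter H)) : list (letter H) :=
  rev (map (fun l => (fst l, negb (snd l))) w).

Lemma valid_invert_word x y w : valid_word H x y w -> valid_word H y x (invert_word w).
Proof.
  unfold invert_word; revert x; induction w as [|[f b] w IH]; simpl; intros x.
  - intros ->; reflexivity.
  - intros [Hl Hw]; apply valid_word_app; exists (ltgt H (f, b)); split; [apply IH, Hw|].
    destruct b; unfold lsrc, ltgt in *; simpl in *; auto.
Qed.

Lemma connected_valid_word x y :
  clos_refl_sym_trans _ (hom_exists H) x y -> exists w, valid_word H x y w.
Proof.
  intros Hxy; induction Hxy as [x y [p Hp]| x | x y _ [w Hw] | x y z _ [w1 H1] _ [w2 H2]].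
  - exists (map (fun f => (f, true)) p).
    revert x Hp; induction p as [|f p IH]; simpl; intros x; [auto|].
    intros [Hf Hp]; split; auto.
  - exists []; reflexivity.
  - exists (invert_word w); apply valid_invert_word, Hw.
  - exists (w1 ++ w2); apply valid_word_app; eauto.
Qed.

Definition word_weight (psi : Ar H -> Z) (w : list (letter H)) : Z :=
  lsum w (fun l => (if snd l then 1 else -1) * psi (fst l)).

Lemma word_weight_groupoid_eq psi w1 w2 :
  groupoid_eq H w1 w2 -> word_weight psi w1 = word_weight psi w2.
Proof.
  induction 1 as [w1 w2 [u1 u2 f b]| | |]; try congruence.
  unfold word_weight; rewrite !lsum_app, !lsum_cons; destruct b; cbn [fst snd negb]; ring.
Qed.

(** Integrate [psi] along words from a base point; thinness of the free groupoid makes this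
    well defined. *)
Lemma tree_potential psi : is_tree H ->
  exists phi : Ob H -> Z, forall h, phi (cod H h) - phi (dom H h) = psi h.
Proof.
  intros [[[o] Hconn] Hthin].
  destruct (choice (fun v w => valid_word H o v w)) as [word Hword].
  { intros v; apply connected_valid_word, Hconn. }
  exists (fun v => word_weight psi (word v)); intros h.
  assert (Hw : valid_word H o (cod H h) (word (dom H h) ++ [(h, true)])).
  { apply valid_word_app; exists (dom H h); simpl; auto. }
  rewrite (word_weight_groupoid_eq psi _ _ (Hthin _ _ _ _ (Hword (cod H h)) Hw)).
  unfold word_weight; rewrite lsum_app, lsum_cons; cbn [fst snd lsum fold_right]; ring.
Qed.

End FreeGroupoid.

Lemma tree_cycle_coeff_zero G T z : is_tree (sub_graph G T) -> is_cycle G z ->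
  (forall h, coeff G z h <> 0 -> sar G T h) -> forall g, coeff G z g = 0.
Proof.
  intros Htree Hz Hsupp g.
  destruct (tree_potential (sub_graph G T) (fun h => deltaZ (proj1_sig h) g) Htree) as [phi Hphi].
  set (Phi := fun x => match excluded_middle_informative (sob G T x) with
                       | left Hx => phi (exist _ x Hx) | right _ => 0 end).
  assert (HPhi : forall h, sar G T h -> Phi (cod G h) - Phi (dom G h) = deltaZ h g).
  { intros h Hh; unfold Phi.
    destruct (excluded_middle_informative (sob G T (cod G h))) as [Hc|Hc];
      [|exfalso; apply Hc, sar_cod, Hh].
    destruct (excluded_middle_informative (sob G T (dom G h))) as [Hd|Hd];
      [|exfalso; apply Hd, sar_dom, Hh].
    rewrite (proof_irrelevance _ Hc (sar_cod G T h Hh)),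
            (proof_irrelevance _ Hd (sar_dom G T h Hh)).
    exact (Hphi (exist _ h Hh)). }
  change (coeff G z g) with (lsum z (fun e => snd e * deltaZ (fst e) g)).
  rewrite (chain_pairing_ext G z (fun h => deltaZ h g) (fun h => Phi (cod G h) - Phi (dom G h))).
  - apply cycle_pairing_coboundary, Hz.
  - intros h Hh; symmetry; apply HPhi, Hsupp, Hh.
Qed.

(** * The span of the relations of a computad *)

Section Presentation.
Variables (G : graph) (C : computad G) (L : list (cells2 G C)).

Definition relation_chain (a : cells2 G C) : chain G := path_diff G (s2 G C a) (t2 G C a).

Definition in_span (c : chain G) : Prop :=
  exists k : cells2 G C -> Z,
    forall f, coeff G c f = lsum L (fun a => k a * coeff G (relation_chain a) f).

Lemma in_span_ext c c' : (forall f, coeff G c f = coeff G c' f) -> in_span c -> in_span c'.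
Proof. intros E [k Hk]; exists k; intros f; rewrite <- E; apply Hk. Qed.

Lemma in_span_zero c : (forall f, coeff G c f = 0) -> in_span c.
Proof.
  intros Hc; exists (fun _ => 0); intros f; rewrite Hc; symmetry; apply lsum_zero; intros; ring.
Qed.

Lemma in_span_app c1 c2 : in_span c1 -> in_span c2 -> in_span (c1 ++ c2).
Proof.
  intros [k1 Hk1] [k2 Hk2]; exists (fun a => k1 a + k2 a); intros f.
  rewrite coeff_app, Hk1, Hk2, <- lsum_add; apply lsum_ext; intros; ring.
Qed.

Lemma in_span_scale k c : in_span c -> in_span (scale G k c).
Proof.
  intros [k' Hk']; exists (fun a => k * k' a); intros f.
  rewrite coeff_scale, Hk', <- lsum_mull; apply lsum_ext; intros; ring.
Qed.

Hypotheses (L_nodup : NoDup L) (L_full : forall a, In a L).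

Lemma in_span_relation a : in_span (relation_chain a).
Proof.
  exists (fun b => deltaZ a b); intros f.
  rewrite (lsum_ext L _ (fun b => coeff G (relation_chain b) f * deltaZ a b)) by (intros; ring).
  symmetry; apply (lsum_delta L (fun b => coeff G (relation_chain b) f)); auto.
Qed.

Lemma presented_eq_in_span x y p q : presented_eq G C x y p q -> in_span (path_diff G p q).
Proof.
  induction 1 as [p q [a p0 q0 _ _] | p | p q _ IH | p q r _ IH1 _ IH2].
  - apply (in_span_ext (relation_chain a)); [|apply in_span_relation].
    intros f; unfold relation_chain; rewrite !coeff_path_diff, !arrow_count_app; ring.
  - apply in_span_zero; intros f; rewrite coeff_path_diff; ring.
  - apply (in_span_ext (scale G (-1) (path_diff G p q))); [|apply in_span_scale, IH].
    intros f; rewrite coeff_scale, !coeff_path_diff; ring.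
  - apply (in_span_ext (path_diff G p q ++ path_diff G q r)); [|apply in_span_app; assumption].
    intros f; rewrite coeff_app, !coeff_path_diff; ring.
Qed.

Section MaximalWeakTree.
Variable T : subgraph G.
Hypotheses (C_presents : presents_thin_reflection G C) (T_maximal : maximal_weak_tree G T)
           (T_tree : is_tree (sub_graph G T)) (T_spanning : forall x, sob G T x).

Lemma fundamental_cycle_in_span f : ~ sar G T f ->
  exists v, in_span v /\ is_cycle G v /\ coeff G v f <> 0 /\
            forall g, coeff G v g <> 0 -> sar G T g \/ g = f.
Proof.
  intros Hf.
  destruct (non_tree_arrow_parallel_paths G T f T_maximal T_spanning Hf)
    as [x [y [p [q [Hp [Hq [Vp [Vq Hc]]]]]]]].
  exists (path_diff G p q); split; [|split; [|split]].
  - apply (presented_eq_in_span x y), C_presents; assumption.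
  - apply (path_diff_cycle G x y); assumption.
  - rewrite coeff_path_diff; lia.
  - intros g Hg; rewrite coeff_path_diff in Hg.
    destruct (classic (In g p)); [apply (Forall_forall _ p) with (x := g) in Hp; auto|].
    destruct (classic (In g q)); [apply (Forall_forall _ q) with (x := g) in Hq; auto|].
    rewrite !arrow_count_notin in Hg by assumption; lia.
Qed.

(** Each arrow [f] of the support outside [T] is eliminated with a multiple of its fundamental
    cycle; what remains is supported in [T], hence zero. *)
Lemma cycle_supported_multiple_in_span l z : is_cycle G z ->
  (forall h, coeff G z h <> 0 -> sar G T h \/ In h l) ->
  exists N, N <> 0 /\ in_span (scale G N z).
Proof.
  revert z; induction l as [|f l IH]; intros z Hz Hsupp.
  - exists 1; split; [lia|]; apply in_span_zero; intros g.
    rewrite coeff_scale, (tree_cycle_coeff_zero G T z T_tree Hz); [ring|].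
    intros h Hh; destruct (Hsupp h Hh) as [|[]]; assumption.
  - destruct (classic (sar G T f)) as [Hf|Hf].
    { apply IH; [assumption|]; intros h Hh; destruct (Hsupp h Hh) as [|[<-|]]; auto. }
    destruct (fundamental_cycle_in_span f Hf) as [v [Hv [Hvc [Hvf Hvsupp]]]].
    set (w := scale G (coeff G v f) z ++ scale G (- coeff G z f) v).
    destruct (IH w) as [N [HN Hw]].
    + intros x; unfold w; rewrite boundary_app, !boundary_scale, Hz, Hvc; ring.
    + intros h Hh; unfold w in Hh; rewrite coeff_app, !coeff_scale in Hh.
      destruct (classic (h = f)) as [->|Hne]; [exfalso; apply Hh; ring|].
      destruct (Z.eq_dec (coeff G z h) 0) as [Ez|Ez].
      * rewrite Ez in Hh.
        destruct (Hvsupp h) as [|]; [intros Ev; apply Hh; rewrite Ev; ring | auto | congruence].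
      * destruct (Hsupp h Ez) as [|[|]]; auto; congruence.
    + exists (N * coeff G v f); split; [apply Z.neq_mul_0; auto|].
      apply (in_span_ext (scale G N w ++ scale G (N * coeff G z f) v));
        [|apply in_span_app; [assumption | apply in_span_scale, Hv]].
      intros g; unfold w; rewrite coeff_app, !coeff_scale, coeff_app, !coeff_scale; ring.
Qed.

Lemma cycle_multiple_in_span z : is_cycle G z -> exists N, N <> 0 /\ in_span (scale G N z).
Proof.
  intros Hz; apply (cycle_supported_multiple_in_span (map fst z)); [assumption|].
  intros h Hh; right; apply coeff_nonzero_in, Hh.
Qed.

End MaximalWeakTree.
End Presentation.

(** * Counting *)

(** Gaussian elimination over [Z], without division: pivot on the first column. *)
Lemma rows_dependent {B} (L : list B) : forall n (M : nat -> B -> Z), (length L < n)%nat ->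
  exists c : nat -> Z, (exists i, (i < n)%nat /\ c i <> 0) /\
                       forall b, In b L -> sum_to n (fun i => c i * M i b) = 0.
Proof.
  induction L as [|b L IH]; intros n M Hn.
  - exists (fun _ => 1); split; [exists 0%nat; simpl in Hn; split; lia | intros b []].
  - destruct (classic (exists i0, (i0 < n)%nat /\ M i0 b <> 0)) as [[i0 [Hi0 Hpiv]]|Hzero].
    + set (M' := fun i b' => M i0 b * M (skip i0 i) b' - M (skip i0 i) b * M i0 b').
      destruct (IH (n - 1)%nat M') as [c' [[i1 [Hi1 Hc'i1]] Hc']]; [simpl in Hn; lia|].
      set (pivot_sum := sum_to (n - 1) (fun i => c' i * M (skip i0 i) b)).
      set (c := fun i => if Nat.eqb i i0 then - pivot_sum
                         else M i0 b * c' (if Nat.ltb i i0 then i else (i - 1)%nat)).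
      assert (Hc0 : c i0 = - pivot_sum) by (unfold c; rewrite Nat.eqb_refl; reflexivity).
      assert (Hcs : forall i, c (skip i0 i) = M i0 b * c' i).
      { intros i; unfold c, skip.
        destruct (Nat.ltb_spec i i0).
        - destruct (Nat.eqb_spec i i0); [lia|]; destruct (Nat.ltb_spec i i0); [reflexivity | lia].
        - destruct (Nat.eqb_spec (S i) i0); [lia|]; destruct (Nat.ltb_spec (S i) i0); [lia|].
          replace (S i - 1)%nat with i by lia; reflexivity. }
      exists c; split.
      * exists (skip i0 i1); split; [unfold skip; destruct (Nat.ltb_spec i1 i0); lia|].
        rewrite Hcs; apply Z.neq_mul_0; auto.
      * intros b' Hb'; rewrite (sum_to_skip n i0), Hc0 by assumption.
        rewrite (sum_to_ext (n - 1) _ (fun i => M i0 b * (c' i * M (skip i0 i) b')))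
          by (intros; rewrite Hcs; ring).
        destruct Hb' as [<-|Hb']; [rewrite sum_to_mull; fold pivot_sum; ring|].
        rewrite <- (Hc' b' Hb'); unfold M'.
        rewrite (sum_to_ext (n - 1) (fun i => c' i * _)
                   (fun i => M i0 b * (c' i * M (skip i0 i) b')
                             - M i0 b' * (c' i * M (skip i0 i) b))) by (intros; ring).
        rewrite sum_to_sub, !sum_to_mull; fold pivot_sum; ring.
    + destruct (IH n M) as [c [Hc0 Hc]]; [simpl in Hn; lia|].
      exists c; split; [assumption|]; intros b' [<-|Hb']; [|apply Hc, Hb'].
      apply sum_to_zero; intros i Hi.
      destruct (Z.eq_dec (M i b) 0) as [E|E]; [rewrite E; ring | exfalso; eauto].
Qed.

Lemma independent_le_span_size G C L n z : independent G n z ->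
  (forall i, (i < n)%nat -> exists N, N <> 0 /\ in_span G C L (scale G N (z i))) ->
  (n <= length L)%nat.
Proof.
  intros Hind Hspan; apply Nat.nlt_ge; intros HL.
  destruct (choice (fun i (Nk : Z * (cells2 G C -> Z)) =>
              (i < n)%nat -> fst Nk <> 0 /\
              forall f, coeff G (scale G (fst Nk) (z i)) f
                        = lsum L (fun a => snd Nk a * coeff G (relation_chain G C a) f)))
    as [Nk HNk].
  { intros i; destruct (Nat.lt_ge_cases i n) as [Hi|Hi].
    - destruct (Hspan i Hi) as [N [HN [k Hk]]]; exists (N, k); auto.
    - exists (0, fun _ => 0); intros; lia. }
  destruct (rows_dependent L n (fun i => snd (Nk i)) HL) as [c [[i1 [Hi1 Hci1]] Hc]].
  assert (Hrel : forall i, (i < n)%nat -> c i * fst (Nk i) = 0).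
  { apply Hind; intros f.
    transitivity (sum_to n (fun i => lsum L (fun a =>
                    coeff G (relation_chain G C a) f * (c i * snd (Nk i) a)))).
    { apply sum_to_ext; intros i Hi.
      rewrite <- Z.mul_assoc, <- coeff_scale, (proj2 (HNk i Hi)), <- lsum_mull.
      apply lsum_ext; intros; ring. }
    rewrite sum_to_lsum_comm; apply lsum_zero; intros a Ha.
    rewrite sum_to_mull, Hc by assumption; ring. }
  destruct (proj1 (Z.mul_eq_0 _ _) (Hrel i1 Hi1)) as [|HN]; [contradiction|].
  exact (proj1 (HNk i1 Hi1) HN).
Qed.

Lemma finite_sig_lt_image {A} n (h : {k | (k < n)%nat} -> A) :
  exists L, (length L <= n)%nat /\ forall u, In (h u) L.
Proof.
  induction n as [|n IH].
  - exists []; split; [simpl; lia|]; intros [k Hk]; lia.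
  - destruct (IH (fun u => h (exist _ (proj1_sig u) (Nat.lt_lt_succ_r _ _ (proj2_sig u)))))
      as [L [HL HLh]].
    exists (h (exist _ n (Nat.lt_succ_diag_r n)) :: L); split; [simpl; lia|].
    intros [k Hk]; destruct (Nat.eq_dec k n) as [->|Hne].
    + left; f_equal; apply sig_eq; reflexivity.
    + right; assert (Hk' : (k < n)%nat) by lia.
      rewrite (proof_irrelevance _ Hk (Nat.lt_lt_succ_r _ _ Hk')); exact (HLh (exist _ k Hk')).
Qed.

Lemma injection_or_enumeration (A : Type) n :
  (exists h : {k | (k < n)%nat} -> A, forall u v, h u = h v -> u = v) \/
  (exists L : list A, (length L < n)%nat /\ NoDup L /\ forall a, In a L).
Proof.
  induction n as [|n IH].
  - left; exists (fun u => False_rect _ (Nat.nlt_0_r _ (proj2_sig u))); intros [u Hu]; lia.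
  - destruct IH as [[h Hh]|[L [HL HLA]]]; [|right; exists L; split; [lia | exact HLA]].
    destruct (classic (exists a, forall u, h u <> a)) as [[a Ha]|Hsurj].
    + left; exists (fun u : {k | (k < S n)%nat} =>
                      match Compare_dec.lt_dec (proj1_sig u) n with
                      | left Hu => h (exist (fun k => (k < n)%nat) _ Hu) | right _ => a end).
      intros [u Hu] [v Hv]; simpl.
      destruct (Compare_dec.lt_dec u n) as [H1|H1], (Compare_dec.lt_dec v n) as [H2|H2].
      * intros E; apply Hh in E; injection E as ->; apply sig_eq; reflexivity.
      * intros E; exfalso; exact (Ha _ E).
      * intros E; exfalso; exact (Ha _ (eq_sym E)).
      * intros _; apply sig_eq; simpl; lia.
    + right; destruct (finite_sig_lt_image n h) as [L [HL HLh]].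
      exists (nodup dec_eq L); split; [|split; [apply NoDup_nodup|]].
      * enough (length (nodup dec_eq L) <= length L)%nat by lia.
        apply NoDup_incl_length; [apply NoDup_nodup | intros a; apply nodup_In].
      * intros a; apply nodup_In, NNPP; intros Ha; apply Hsurj; exists a.
        intros u <-; apply Ha, HLh.
Qed.

Lemma hom_exists_adjacent_closure G x y : clos_refl_sym_trans _ (hom_exists G) x y ->
  clos_refl_sym_trans _ (adjacent G) x y.
Proof.
  induction 1 as [x y [p Hp]| | |];
    [| apply rst_refl | apply rst_sym; assumption | eapply rst_trans; eassumption].
  revert x Hp; induction p as [|h p IH]; simpl; intros x; [intros ->; apply rst_refl|].
  intros [<- Hp]; eapply rst_trans; [apply rst_step; exists h; split; reflexivity | apply IH, Hp].
Qed.

Lemma betti0_connected G b0 : connected G -> betti0 G b0 -> b0 = 1%nat.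
Proof.
  intros [[x0] HG] [v [Hsep Hcover]].
  destruct (Hcover x0) as [i [Hi _]].
  destruct (Nat.lt_ge_cases 1 b0); [|lia].
  exfalso; apply (Hsep 0%nat 1%nat); try lia; apply hom_exists_adjacent_closure, HG.
Qed.

Theorem mainTheorem16 (G : graph) (chi : Z) :
  connected G -> fair G -> euler_char_is G chi ->
  forall C : computad G, presents_thin_reflection G C ->
    card_ge (cells2 G C) (1 - chi).
Proof.
  intros Hconn [T [Hmt Htree]] [b0 [b1 [Hb0 [[[z [Hz Hind]] _] ->]]]] C Hpres n Hn.
  rewrite (betti0_connected G b0 Hconn Hb0) in Hn.
  destruct (injection_or_enumeration (cells2 G C) n) as [Hinj|[L [HL [Hnd Hfull]]]];
    [exact Hinj | exfalso].
  pose proof (maximal_weak_tree_spanning G T Hconn Hmt) as Hspan.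
  assert (Hb1 : (b1 <= length L)%nat).
  { apply (independent_le_span_size G C L b1 z Hind); intros i Hi.
    apply (cycle_multiple_in_span G C L Hnd Hfull T Hpres Hmt Htree Hspan), Hz, Hi. }
  lia.
Qed.
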